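(* Let $(X,\Phi)$ be a semitopological Mal'tsev space and let $\mathcal C$ be an epireflective subcategory of $\mathbf{Top}$ closed under supertopologies. Then the reflection arrow $\mathrm{r}_{(X,\mathcal C)}\colon X\to\mathrm{r}_{\mathcal C}X$ is an open map.
   Context: A Mal'tsev operation on $X$ is a map $\Phi\colon X^3\to X$ with $\Phi(x,x,y)=\Phi(y,x,x)=y$ for all $x,y\in X$; a semitopological Mal'tsev space is a space with a separately continuous Mal'tsev operation. An epireflective subcategory $\mathcal C$ of $\mathbf{Top}$ is a full, isomorphism-closed subcategory closed under products and subspaces; each space $X$ has a reflection $\mathrm{r}_{\mathcal C}X\in\mathcal C$ with a continuous surjection $\mathrm{r}_{(X,\mathcal C)}\colon X\to\mathrm{r}_{\mathcal C}X$ through which every continuous map from $X$ into a space of $\mathcal C$ factors uniquely. $\mathcal C$ is closed under supertopologies if $(X,\tau)\in\mathcal C$ and $\rho\supseteq\tau$ a topology on $X$ imply $(X,\rho)\in\mathcal C$. *)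

Set Implicit Arguments.

(** A topology on [T]: a family of "open" subsets of [T] containing the whole
    set, closed under binary intersections and arbitrary unions (hence also
    containing the empty set, the empty union). *)
Definition is_topology (T : Type) (O : (T -> Prop) -> Prop) : Prop :=
  O (fun _ => True) /\
  (forall U V, O U -> O V -> O (fun x => U x /\ V x)) /\
  (forall F : (T -> Prop) -> Prop, (forall U, F U -> O U) ->
     O (fun x => exists U, F U /\ U x)).

Record space := Space {
  carrier :> Type;
  open : (carrier -> Prop) -> Prop;
  open_topology : is_topology open }.

Definition continuous {X Y : space} (f : X -> Y) : Prop :=
  forall V, open Y V -> open X (fun x => V (f x)).

Definition open_map {X Y : space} (f : X -> Y) : Prop :=
  forall U, open X U -> open Y (fun y => exists x, U x /\ f x = y).

Definition surjective (A B : Type) (f : A -> B) : Prop :=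
  forall y, exists x, f x = y.

Definition generated (T : Type) (B : (T -> Prop) -> Prop) : (T -> Prop) -> Prop :=
  fun U => forall O, is_topology O -> (forall S, B S -> O S) -> O U.

Lemma generated_topology (T : Type) (B : (T -> Prop) -> Prop) :
  is_topology (generated B).
Proof.
split; [|split].
- intros O [HT _] _; exact HT.
- intros U V HU HV O HO HB; destruct HO as [HT [HI HUn]].
  apply HI; [apply HU|apply HV]; repeat split; assumption.
- intros F HF O HO HB; destruct HO as [HT [HI HUn]].
  apply HUn; intros U HU; apply (HF U HU); repeat split; assumption.
Qed.

Definition prod_space {I : Type} (X : I -> space) : space :=
  @Space (forall i, X i)
    (generated (fun S => exists i (U : X i -> Prop), open (X i) U /\
                            forall f, S f <-> U (f i)))
    (generated_topology _).

Definition subspace {X : space} (A : X -> Prop) : space :=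
  @Space {x : X | A x}
    (generated (fun S => exists U, open X U /\ forall x, S x <-> U (proj1_sig x)))
    (generated_topology _).

Definition homeomorphic (X Y : space) : Prop :=
  exists (f : X -> Y) (g : Y -> X), continuous f /\ continuous g /\
    (forall x, g (f x) = x) /\ (forall y, f (g y) = y).

(** A (full) subcategory of Top is given by a class of spaces. It is
    epireflective when it is isomorphism-closed and closed under products
    and subspaces. *)
Definition epireflective (C : space -> Prop) : Prop :=
  (forall X Y, C X -> homeomorphic X Y -> C Y) /\
  (forall (I : Type) (X : I -> space), (forall i, C (X i)) -> C (prod_space X)) /\
  (forall (X : space) (A : X -> Prop), C X -> C (subspace A)).

Definition closed_under_supertopologies (C : space -> Prop) : Prop :=
  forall (X : space) (rho : (X -> Prop) -> Prop) (Hrho : is_topology rho),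
    C X -> (forall U, open X U -> rho U) -> C (@Space X rho Hrho).

Definition is_reflection (C : space -> Prop) (X Y : space) (r : X -> Y) : Prop :=
  C Y /\ continuous r /\ surjective r /\
  forall (Z : space) (f : X -> Z), C Z -> continuous f ->
    exists g : Y -> Z, (continuous g /\ forall x, g (r x) = f x) /\
      forall g' : Y -> Z, continuous g' -> (forall x, g' (r x) = f x) ->
        forall y, g' y = g y.

Definition maltsev (T : Type) (Phi : T -> T -> T -> T) : Prop :=
  forall x y, Phi x x y = y /\ Phi y x x = y.

Definition separately_continuous {X : space} (Phi : X -> X -> X -> X) : Prop :=
  (forall b c, continuous (fun a => Phi a b c)) /\
  (forall a c, continuous (fun b => Phi a b c)) /\
  (forall a b, continuous (fun c => Phi a b c)).

(** The reflection identifies points compatibly with [Phi]: if [r u = r s]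
    then [r (Phi t s u) = r t], by applying the universal property to the
    continuous map [c |-> r (Phi t s c)].  Hence the [r]-saturation of an
    open set [U] is open: if [r x = r u] with [u] in [U], the open set
    [{t | Phi t x u \in U}] contains [x] and lies in the saturation.  So
    adding all images [r[U]] to the topology of [Y] keeps [r] continuous; the
    refined space is in [C] by closure under supertopologies, and the
    universal property makes the identity from [Y] to it continuous, i.e. each
    [r[U]] was already open. *)
From Stdlib Require Import FunctionalExtensionality PropExtensionality.

Set Implicit Arguments.

Definition image (A B : Type) (f : A -> B) (U : A -> Prop) : B -> Prop :=
  fun y => exists x, U x /\ f x = y.

Lemma generated_subbase (T : Type) (B : (T -> Prop) -> Prop) (S : T -> Prop) :
  B S -> generated B S.
Proof. intros HS O _ HB; exact (HB S HS). Qed.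

Lemma open_of_nbhds (X : space) (W : X -> Prop) :
  (forall x, W x -> exists V, open X V /\ V x /\ forall z, V z -> W z) ->
  open X W.
Proof.
intros Hnbhd.
replace W with (fun x => exists V, (open X V /\ forall z, V z -> W z) /\ V x).
- destruct (open_topology X) as [_ [_ Hunion]].
  apply Hunion; intros V [HV _]; exact HV.
- apply functional_extensionality; intros x; apply propositional_extensionality.
  split.
  + intros [V [[_ HVW] Vx]]; exact (HVW x Vx).
  + intros Wx; destruct (Hnbhd x Wx) as [V [HV [Vx HVW]]].
    exists V; auto.
Qed.

Lemma preimage_topology {A : space} {T : Type} (f : A -> T) :
  is_topology (fun V : T -> Prop => open A (fun a => V (f a))).
Proof.
destruct (open_topology A) as [Htop [Hinter Hunion]].
split; [exact Htop | split].
- intros U V HU HV; exact (Hinter _ _ HU HV).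
- intros F HF.
  replace (fun a => exists U, F U /\ U (f a))
    with (fun a => exists W, (exists U, F U /\ W = fun a => U (f a)) /\ W a).
  + apply Hunion; intros W [U [HU ->]]; exact (HF U HU).
  + apply functional_extensionality; intros a; apply propositional_extensionality.
    split.
    * intros [W [[U [HU ->]] HUa]]; exists U; auto.
    * intros [U [HU HUa]]; exists (fun a => U (f a)); split; [exists U|]; auto.
Qed.

Lemma preimage_generated_open {A : space} {T : Type} (B : (T -> Prop) -> Prop)
  (f : A -> T) :
  (forall S, B S -> open A (fun a => S (f a))) ->
  forall V, generated B V -> open A (fun a => V (f a)).
Proof. intros HB V HV; exact (HV _ (preimage_topology f) HB). Qed.

Section Reflection.

Variables (C : space -> Prop) (X Y : space) (r : X -> Y).
Hypothesis Hr : is_reflection C X Y r.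

Lemma reflection_fiber_eq (Z : space) (f : X -> Z) :
  C Z -> continuous f -> forall u s, r u = r s -> f u = f s.
Proof.
intros HZ Hf u s Hus.
destruct Hr as [_ [_ [_ Hfactor]]].
destruct (Hfactor Z f HZ Hf) as [g [[_ Hg] _]].
rewrite <- (Hg u), <- (Hg s), Hus; reflexivity.
Qed.

Lemma reflection_finest_topology (rho : (Y -> Prop) -> Prop)
  (Hrho : is_topology rho) :
  C (Space Hrho) -> @continuous X (Space Hrho) r ->
  forall V, rho V -> open Y V.
Proof.
intros HC' Hr' V HV.
destruct Hr as [_ [_ [Hsurj Hfactor]]].
destruct (Hfactor (Space Hrho) r HC' Hr') as [g [[Hg Hgr] _]].
assert (Hid : g = fun y => y).
{ apply functional_extensionality; intros y.
  destruct (Hsurj y) as [x <-]; apply Hgr. }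
subst g; exact (Hg V HV).
Qed.

Variable Phi : X -> X -> X -> X.
Hypotheses (HM : maltsev Phi) (Hsc : separately_continuous Phi).

Lemma reflection_maltsev_shift (t s u : X) :
  r u = r s -> r (Phi t s u) = r t.
Proof.
intros Hus.
destruct Hr as [HCY [Hrc _]].
destruct Hsc as [_ [_ Hcont3]].
assert (Hcont : continuous (fun c => r (Phi t s c))).
{ intros V HV; exact (Hcont3 t s (fun c => V (r c)) (Hrc V HV)). }
rewrite (reflection_fiber_eq HCY Hcont Hus).
f_equal; apply (proj2 (HM s t)).
Qed.

Lemma open_reflection_saturation (U : X -> Prop) :
  open X U -> open X (fun x => image r U (r x)).
Proof.
intros HU; apply open_of_nbhds; intros x [u [Hu Hux]].
destruct Hsc as [Hcont1 _].
exists (fun t => U (Phi t x u)); split; [|split].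
- exact (Hcont1 x u U HU).
- rewrite (proj1 (HM x u)); exact Hu.
- intros t Ht; exists (Phi t x u); split; [exact Ht|].
  exact (reflection_maltsev_shift t Hux).
Qed.

End Reflection.

Theorem proposition4p8 (X : space) (Phi : X -> X -> X -> X)
  (HM : maltsev Phi) (Hsc : separately_continuous Phi)
  (C : space -> Prop) (HC : epireflective C)
  (Hsup : closed_under_supertopologies C)
  (Y : space) (r : X -> Y) (Hr : is_reflection C X Y r) :
  open_map r.
Proof.
intros U HU.
set (images := fun S : Y -> Prop => exists U, open X U /\ S = image r U).
pose proof (generated_topology (fun S => open Y S \/ images S)) as Hrefined.
assert (HC' : C (Space Hrefined)).
{ apply Hsup; [exact (proj1 Hr)|].
  intros V HV; apply generated_subbase; left; exact HV. }
assert (Hr' : @continuous X (Space Hrefined) r).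
{ intros V; apply preimage_generated_open; intros S [HS | [U' [HU' ->]]].
  - exact (proj1 (proj2 Hr) S HS).
  - exact (open_reflection_saturation Hr HM Hsc U' HU'). }
apply (reflection_finest_topology Hr HC' Hr').
apply generated_subbase; right; exists U; split; [exact HU | reflexivity].
Qed.
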